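(* For any variety $\mathsf{V}$ of $\mathcal{L}$-algebras, the following are equivalent: (1) $\mathsf{V}$ has a guarded deduction theorem. (2) There exist conjunctions of equations $\gamma(x_1,x_2,y_1,y_2,\overline{z})$ and $\varphi(x_1,x_2,y_1,y_2,\overline{z})$ such that for every finitely generated $\mathbf{A}\in\mathsf{V}$ and all $a_1,a_2,b_1,b_2\in A$: there exist $\mathbf{C}\in\mathsf{V}$ and an embedding $e\colon\mathbf{A}\to\mathbf{C}$ with $\mathbf{C}\models\exists\overline{z}.\gamma(e(a_1),e(a_2),e(b_1),e(b_2),\overline{z})$; and $(a_1,a_2)\in\mathrm{Cg}^{\mathbf{A}}(b_1,b_2)$ if and only if for every $\mathbf{B}\in\mathsf{V}$ and every homomorphism $h\colon\mathbf{A}\to\mathbf{B}$, $\mathbf{B}\models\forall\overline{z}.(\gamma\to\varphi)(h(a_1),h(a_2),h(b_1),h(b_2),\overline{z})$.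
   Context: $\mathcal{L}$ is an algebraic first-order language with at least one constant symbol. $\mathsf{V}\models\alpha$ means all members satisfy $\alpha$ under all assignments. $\mathrm{Cg}^{\mathbf{A}}(b_1,b_2)$ is the congruence of $\mathbf{A}$ generated by $(b_1,b_2)$; $\overline{z}$ denotes a finite set of variables. $\mathsf{V}$ has a guarded deduction theorem if there exist conjunctions of equations $\gamma(x_1,x_2,y_1,y_2,\overline{z})$ and $\varphi(x_1,x_2,y_1,y_2,\overline{z})$ such that for every finite set of variables $\overline{w}$ with $\overline{w}\cap\overline{z}=\emptyset$, all terms $s_1,s_2,t_1,t_2$ in variables $\overline{w}$, and every conjunction of equations $\pi(\overline{w})$: (i) $\mathsf{V}\models(\pi\mathbin{\&}t_1\approx t_2)\to s_1\approx s_2$ iff $\mathsf{V}\models\pi\to\forall\overline{z}.(\gamma\to\varphi)(s_1,s_2,t_1,t_2,\overline{z})$; and (ii) for every equation $\sigma(\overline{w})$, $\mathsf{V}\models(\pi\mathbin{\&}\gamma(s_1,s_2,t_1,t_2,\overline{z}))\to\sigma$ iff $\mathsf{V}\models\pi\to\sigma$. *)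

From mathcomp Require Import all_boot.
From Stdlib Require List.
Unset Printing Implicit Defensive.

Section UA.
Context {F : Type}.
Variable ar : F -> nat.

Inductive term : Type :=
| Var : nat -> term
| App : forall f : F, ('I_(ar f) -> term) -> term.

Record algebra : Type := Algebra {
  carrier : Type;
  op : forall f : F, ('I_(ar f) -> carrier) -> carrier }.
Arguments op : clear implicits.

Fixpoint eval (A : algebra) (v : nat -> carrier A) (t : term) : carrier A :=
  match t with
  | Var x => v x
  | App f args => op A f (fun i => eval A v (args i))
  end.

Fixpoint subst (s : nat -> term) (t : term) : term :=
  match t with
  | Var x => s x
  | App f args => App f (fun i => subst s (args i))
  end.

Fixpoint vars_in (P : nat -> Prop) (t : term) : Prop :=
  match t with
  | Var x => P x
  | App f args => forall i, vars_in P (args i)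
  end.

Definition equation := (term * term)%type.
Definition conj_eq := seq equation.

Definition subst_eq (s : nat -> term) (e : equation) : equation :=
  (subst s e.1, subst s e.2).
Definition subst_conj (s : nat -> term) (c : conj_eq) : conj_eq :=
  map (subst_eq s) c.

Definition eq_vars_in (P : nat -> Prop) (e : equation) : Prop :=
  vars_in P e.1 /\ vars_in P e.2.
Definition conj_vars_in (P : nat -> Prop) (c : conj_eq) : Prop :=
  forall e, List.In e c -> eq_vars_in P e.

Definition sat_eq (A : algebra) (v : nat -> carrier A) (e : equation) : Prop :=
  eval A v e.1 = eval A v e.2.
Definition sat_conj (A : algebra) (v : nat -> carrier A) (c : conj_eq) : Prop :=
  forall e, List.In e c -> sat_eq A v e.

(** A variety is given by a set of defining identities (Birkhoff);
    its members are the algebras satisfying all of them. *)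
Definition variety := equation -> Prop.
Definition in_var (V : variety) (A : algebra) : Prop :=
  forall e, V e -> forall v : nat -> carrier A, sat_eq A v e.

Definition is_hom (A B : algebra) (h : carrier A -> carrier B) : Prop :=
  forall (f : F) (args : 'I_(ar f) -> carrier A),
    h (op A f args) = op B f (fun i => h (args i)).
Definition is_embedding (A B : algebra) (h : carrier A -> carrier B) : Prop :=
  is_hom A B h /\ (forall x y, h x = h y -> x = y).

Inductive generated (A : algebra) (X : carrier A -> Prop) : carrier A -> Prop :=
| gen_base : forall a, X a -> generated A X a
| gen_op : forall (f : F) (args : 'I_(ar f) -> carrier A),
    (forall i, generated A X (args i)) -> generated A X (op A f args).

Definition fin_gen (A : algebra) : Prop :=
  exists gs : seq (carrier A), forall a, generated A (fun x => List.In x gs) a.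

Definition is_congruence (A : algebra) (R : carrier A -> carrier A -> Prop) : Prop :=
  [/\ (forall x, R x x), (forall x y, R x y -> R y x),
      (forall x y z, R x y -> R y z -> R x z) &
      (forall (f : F) (a b : 'I_(ar f) -> carrier A),
          (forall i, R (a i) (b i)) -> R (op A f a) (op A f b))].

Definition Cg (A : algebra) (b1 b2 : carrier A) (x y : carrier A) : Prop :=
  forall R, is_congruence A R -> R b1 b2 -> R x y.

(** Variable conventions for gamma(x1,x2,y1,y2,zbar), phi(x1,x2,y1,y2,zbar):
    x1 = var 0, x2 = var 1, y1 = var 2, y2 = var 3, and zbar = the finite
    list zs of variables, all > 3. *)
Definition gp_shape (zs : seq nat) (gam phi : conj_eq) : Prop :=
  [/\ (forall z, List.In z zs -> 3 < z),
      conj_vars_in (fun n => n <= 3 \/ List.In n zs) gam &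
      conj_vars_in (fun n => n <= 3 \/ List.In n zs) phi].

Definition sub4 (s1 s2 t1 t2 : term) : nat -> term :=
  fun n => match n with
           | 0 => s1 | 1 => s2 | 2 => t1 | 3 => t2 | _ => Var n end.

Definition asg4 (A : algebra) (p q r s : carrier A) (c : nat -> carrier A)
  : nat -> carrier A :=
  fun n => match n with
           | 0 => p | 1 => q | 2 => r | 3 => s | _ => c n end.

Definition update (A : algebra) (v c : nat -> carrier A) (zs : seq nat)
  : nat -> carrier A :=
  fun n => if n \in zs then c n else v n.

(** V |= (pi & t1 = t2) -> s1 = s2  iff
    V |= pi -> forall zbar. (gam -> phi)(s1,s2,t1,t2,zbar), and (ii). *)
Definition guarded_deduction_theorem (V : variety) : Prop :=
  exists (zs : seq nat) (gam phi : conj_eq), gp_shape zs gam phi /\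
  forall ws : seq nat, (forall w, List.In w ws -> ~ List.In w zs) ->
  let inws := fun n => List.In n ws in
  forall s1 s2 t1 t2 : term,
    vars_in inws s1 -> vars_in inws s2 -> vars_in inws t1 -> vars_in inws t2 ->
  forall pi : conj_eq, conj_vars_in inws pi ->
  let gam' := subst_conj (sub4 s1 s2 t1 t2) gam in
  let phi' := subst_conj (sub4 s1 s2 t1 t2) phi in
  ((forall A, in_var V A -> forall v : nat -> carrier A,
       sat_conj A v pi -> sat_eq A v (t1, t2) -> sat_eq A v (s1, s2))
   <->
   (forall A, in_var V A -> forall v : nat -> carrier A,
       sat_conj A v pi ->
       forall c : nat -> carrier A,
         sat_conj A (update A v c zs) gam' -> sat_conj A (update A v c zs) phi'))
  /\
  (forall sg : equation, eq_vars_in inws sg ->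
    ((forall A, in_var V A -> forall v : nat -> carrier A,
        sat_conj A v pi -> sat_conj A v gam' -> sat_eq A v sg)
     <->
     (forall A, in_var V A -> forall v : nat -> carrier A,
        sat_conj A v pi -> sat_eq A v sg))).

Definition semantic_condition (V : variety) : Prop :=
  exists (zs : seq nat) (gam phi : conj_eq), gp_shape zs gam phi /\
  forall A : algebra, in_var V A -> fin_gen A ->
  forall a1 a2 b1 b2 : carrier A,
    (exists (C : algebra) (e : carrier A -> carrier C),
        [/\ in_var V C, is_embedding A C e &
            exists c : nat -> carrier C,
              sat_conj C (asg4 C (e a1) (e a2) (e b1) (e b2) c) gam])
    /\
    (Cg A b1 b2 a1 a2 <->
     (forall (B : algebra) (h : carrier A -> carrier B),
         in_var V B -> is_hom A B h ->
         forall c : nat -> carrier B,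
           sat_conj B (asg4 B (h a1) (h a2) (h b1) (h b2) c) gam ->
           sat_conj B (asg4 B (h a1) (h a2) (h b1) (h b2) c) phi)).

End UA.

(* Name the generators of a finitely generated A in V by variables ws
   disjoint from zbar, and represent a1, a2, b1, b2 by terms s1, s2, t1, t2 over ws.
   For a conjunction X, the equations that V derives from X together with a finite
   part of the diagram of A form a congruence on terms; the quotient Q_X lies in V
   and receives the canonical homomorphism from A.  For X = gamma(s1,s2,t1,t2),
   clause (ii) makes A -> Q_X injective, and gamma holds at the images of the a's.
   For X = (t1 = t2), (a1, a2) lies in Cg(b1, b2) iff V |= (pi & t1 = t2) -> s1 = s2
   for some finite diagram pi; likewise the homomorphism condition of (2) holds iff
   V |= pi -> forall zbar. (gamma -> phi) for some finite diagram pi, and clause (i)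
   identifies the two.
   (2) -> (1).  Apply (2) to the algebra presented in V by the generators ws and the
   relations pi, made finitely generated by sending every other variable to a
   constant.  Its homomorphisms into members of V are the assignments satisfying pi,
   so Cg and the homomorphism condition of (2) become the two sides of (i), and the
   embedding given by (2) makes gamma conservative over pi, which is (ii). *)

From mathcomp Require Import all_boot.
From Stdlib Require List.
From Stdlib Require Import ClassicalEpsilon FunctionalExtensionality.
From Stdlib Require Import PropExtensionality ProofIrrelevance.

Section UniversalAlgebra.
Context {F : Type} (ar : F -> nat).
Local Notation tm := (term ar).
Local Notation alg := (algebra ar).
Local Notation car := (carrier ar).

Lemma In_mem (T : eqType) (x : T) (s : seq T) : List.In x s <-> x \in s.
Proof.
elim: s => [|y s IH] //=; rewrite in_cons; split.
- by case=> [->|/IH ->]; rewrite ?eqxx ?orbT.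
- by case/orP=> [/eqP ->|/IH]; [left | right].
Qed.

Lemma forall_In_cat (T : Type) (P : T -> Prop) (s1 s2 : seq T) :
  (forall x, List.In x (s1 ++ s2) -> P x) <->
  (forall x, List.In x s1 -> P x) /\ (forall x, List.In x s2 -> P x).
Proof.
split=> [H | [H1 H2] x /List.in_app_iff [/H1 | /H2] //].
by split=> x Hx; apply: H; apply/List.in_app_iff; [left | right].
Qed.

Lemma eval_subst (A : alg) v s t :
  eval ar A v (subst ar s t) = eval ar A (fun n => eval ar A v (s n)) t.
Proof.
elim: t => [n|f args IH] //=; congr (op ar A f).
by apply: functional_extensionality => i; apply: IH.
Qed.

Lemma eval_eq_on (A : alg) (P : nat -> Prop) v w t :
  vars_in ar P t -> (forall n, P n -> v n = w n) -> eval ar A v t = eval ar A w t.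
Proof.
elim: t => [n|f args IH] /= Ht Evw; first exact: Evw.
by congr (op ar A f); apply: functional_extensionality => i; apply: IH.
Qed.

Lemma sat_eq_eq_on (A : alg) (P : nat -> Prop) v w e :
  eq_vars_in ar P e -> (forall n, P n -> v n = w n) ->
  sat_eq ar A v e <-> sat_eq ar A w e.
Proof.
by case=> H1 H2 Evw; rewrite /sat_eq (eval_eq_on _ _ _ _ _ H1 Evw) (eval_eq_on _ _ _ _ _ H2 Evw).
Qed.

Lemma sat_conj_eq_on (A : alg) (P : nat -> Prop) v w pi :
  conj_vars_in ar P pi -> (forall n, P n -> v n = w n) ->
  sat_conj ar A v pi -> sat_conj ar A w pi.
Proof. by move=> Hpi Evw Hv e He; apply/(sat_eq_eq_on _ _ _ _ _ (Hpi e He) Evw)/Hv. Qed.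

Lemma sat_conj1 (A : alg) v e : sat_conj ar A v [:: e] <-> sat_eq ar A v e.
Proof. by split=> [|H e' [<-|[]]]; [apply; left | ]. Qed.

Lemma hom_eval (A B : alg) h v t : is_hom ar A B h ->
  h (eval ar A v t) = eval ar B (fun n => h (v n)) t.
Proof.
move=> Hh; elim: t => [n|f args IH] //=; rewrite Hh; congr (op ar B f).
by apply: functional_extensionality => i; apply: IH.
Qed.

Lemma sat_conj_hom (A B : alg) h v pi : is_hom ar A B h ->
  sat_conj ar A v pi -> sat_conj ar B (fun n => h (v n)) pi.
Proof. by move=> Hh Hv e He; rewrite /sat_eq -!hom_eval // (Hv e He). Qed.

Lemma kernel_congruence (A B : alg) h : is_hom ar A B h ->
  is_congruence ar A (fun x y => h x = h y).
Proof.
move=> Hh; split=> // [x y z -> -> //|f a b Eab].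
by rewrite !Hh; congr (op ar B f); apply: functional_extensionality.
Qed.

Definition term_alg : alg := Algebra ar tm (App ar).

Lemma eval_term_alg v t : eval ar term_alg v t = subst ar v t.
Proof.
elim: t => [n|f args IH] //=; congr (App ar f).
by apply: functional_extensionality => i; apply: IH.
Qed.

Lemma subst_Var t : subst ar (Var ar) t = t.
Proof.
elim: t => [n|f args IH] //=; congr (App ar f).
by apply: functional_extensionality => i; apply: IH.
Qed.

Section Quotient.
Variables (A : alg) (R : car A -> car A -> Prop).

Definition quot_carrier := {P : car A -> Prop | exists x, P = R x}.
Definition qcl (x : car A) : quot_carrier := exist _ (R x) (ex_intro _ x erefl).
Definition qrep (q : quot_carrier) : car A :=
  proj1_sig (constructive_indefinite_description _ (proj2_sig q)).

Lemma qrepK : cancel qrep qcl.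
Proof.
case=> P HP; rewrite /qrep /=; case: constructive_indefinite_description => x Ex /=.
by subst P; congr exist; apply: proof_irrelevance.
Qed.

Definition quot : alg :=
  Algebra ar quot_carrier (fun f args => qcl (op ar A f (fun i => qrep (args i)))).

Hypothesis congR : is_congruence ar A R.

Lemma qcl_eq x y : qcl x = qcl y <-> R x y.
Proof.
case: congR => Rrefl Rsym Rtrans _; split=> [/(f_equal (@proj1_sig _ _)) /= -> // | Rxy].
have ERxy : R x = R y.
  apply: functional_extensionality => z; apply: propositional_extensionality.
  by split; apply: Rtrans; [apply: Rsym|].
by rewrite /qcl; move: (ex_intro _ x _); rewrite ERxy => p; congr exist; apply: proof_irrelevance.
Qed.

Lemma qrep_qcl x : R (qrep (qcl x)) x.
Proof. by apply/qcl_eq; rewrite qrepK. Qed.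

Lemma qcl_hom : is_hom ar A quot qcl.
Proof.
move=> f args /=; apply/qcl_eq; case: congR => _ Rsym _ Rop.
by apply: Rop => i; apply: Rsym; apply: qrep_qcl.
Qed.

Lemma eval_quot v t : eval ar quot (fun n => qcl (v n)) t = qcl (eval ar A v t).
Proof. by rewrite (hom_eval _ _ _ _ _ qcl_hom). Qed.

Lemma quot_in_var V :
  (forall e, V e -> forall v, R (eval ar A v e.1) (eval ar A v e.2)) -> in_var ar V quot.
Proof.
move=> HV e He w; rewrite /sat_eq.
have -> : w = (fun n => qcl (qrep (w n))) by apply: functional_extensionality => n; rewrite qrepK.
by rewrite !eval_quot; apply/qcl_eq/HV.
Qed.

End Quotient.

Lemma Cg_iff_hom V (A : alg) b1 b2 a1 a2 : in_var ar V A ->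
  Cg ar A b1 b2 a1 a2 <->
  forall (B : alg) h, in_var ar V B -> is_hom ar A B h -> h b1 = h b2 -> h a1 = h a2.
Proof.
move=> HA; split=> [Hcg B h _ Hh | Hhom R HR Rb].
  exact: Hcg (kernel_congruence _ _ _ Hh).
apply/(qcl_eq _ _ HR); apply: Hhom (qcl_hom _ _ HR) _; last exact/(qcl_eq _ _ HR).
by apply: (quot_in_var _ _ HR) => e He v; rewrite (HA e He v); case: HR => Rrefl *; apply: Rrefl.
Qed.

Lemma In_leq_sumn z zs : List.In z zs -> z <= sumn zs.
Proof.
elim: zs => [|x zs IH] //= [<-|/IH]; first exact: leq_addr.
by move/leq_trans; apply; apply: leq_addl.
Qed.

Lemma fin_gen_fresh (A : alg) (zs : seq nat) (a0 : car A) : fin_gen ar A ->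
  exists ws (g : nat -> car A) (tr : car A -> tm),
    (forall w, List.In w ws -> ~ List.In w zs) /\
    forall x, vars_in ar (fun n => List.In n ws) (tr x) /\ eval ar A g (tr x) = x.
Proof.
case=> gs gen_gs; pose m := (sumn zs).+1.
exists (List.seq m (size gs)), (fun n => List.nth (n - m) gs a0).
suff /choice [tr Htr] : forall x, exists t,
    vars_in ar (fun n => List.In n (List.seq m (size gs))) t /\
    eval ar A (fun n => List.nth (n - m) gs a0) t = x.
  exists tr; split=> // w /List.in_seq [/leP m_w _] /In_leq_sumn w_zs.
  by move: (leq_trans m_w w_zs); rewrite ltnn.
move=> x; elim: (gen_gs x) => {x} [x /(List.In_nth _ _ a0) [i [/ltP lt_i <-]] | f args _ IH].
  exists (Var ar (m + i)); rewrite /= addKn; split=> //.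
  by apply/List.in_seq; split; apply/leP; rewrite ?leq_addr ?ltn_add2l.
have [ts Hts] := choice _ IH; exists (App ar f ts); split=> [i|/=]; first exact: (Hts i).1.
by congr (op ar A f); apply: functional_extensionality => i; apply: (Hts i).2.
Qed.

Section Guard.
Context {V : variety ar} {zs : seq nat} {gam phi : conj_eq ar}.
Hypothesis shape : gp_shape ar zs gam phi.
Context {ws : seq nat}.
Hypothesis ws_fresh : forall w, List.In w ws -> ~ List.In w zs.
Local Notation inws := (fun n => List.In n ws).
Context {s1 s2 t1 t2 : tm}.
Hypotheses (s1_ws : vars_in ar inws s1) (s2_ws : vars_in ar inws s2)
           (t1_ws : vars_in ar inws t1) (t2_ws : vars_in ar inws t2).
Local Notation sigma := (sub4 ar s1 s2 t1 t2).
Local Notation gam' := (subst_conj ar sigma gam).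
Local Notation phi' := (subst_conj ar sigma phi).

Definition gamma_to_phi (B : alg) (p q r s : car B) : Prop :=
  forall c, sat_conj ar B (asg4 ar B p q r s c) gam -> sat_conj ar B (asg4 ar B p q r s c) phi.

Definition valid_guarded (pi : conj_eq ar) : Prop :=
  forall B, in_var ar V B -> forall v, sat_conj ar B v pi ->
  gamma_to_phi B (eval ar B v s1) (eval ar B v s2) (eval ar B v t1) (eval ar B v t2).

Definition valid_quasi_identity (pi : conj_eq ar) : Prop :=
  forall B, in_var ar V B -> forall v, sat_conj ar B v pi ->
  sat_eq ar B v (t1, t2) -> sat_eq ar B v (s1, s2).

Lemma update_ws (B : alg) v c n : List.In n ws -> update ar B v c zs n = v n.
Proof. by move=> /ws_fresh n_zs; rewrite /update; case: ifP => // /In_mem. Qed.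

Lemma sat_update_ws (B : alg) v c pi : conj_vars_in ar inws pi ->
  sat_conj ar B v pi -> sat_conj ar B (update ar B v c zs) pi.
Proof. by move=> pi_ws; apply: sat_conj_eq_on pi_ws _ => n /update_ws ->. Qed.

Lemma sat_subst_update (B : alg) v c X :
  conj_vars_in ar (fun n => n <= 3 \/ List.In n zs) X ->
  sat_conj ar B (update ar B v c zs) (subst_conj ar sigma X) <->
  sat_conj ar B (asg4 ar B (eval ar B v s1) (eval ar B v s2) (eval ar B v t1) (eval ar B v t2) c) X.
Proof.
set w := asg4 ar B _ _ _ _ c => X_vars; have [zs_gt3 _ _] := shape.
have eval_sigma n : n <= 3 \/ List.In n zs -> eval ar B (update ar B v c zs) (sigma n) = w n.
  have eval_ws t : vars_in ar inws t -> eval ar B (update ar B v c zs) t = eval ar B v t.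
    by move=> t_ws; apply: eval_eq_on t_ws _ => m /update_ws.
  case: n => [|[|[|[|n]]]] /= Hn; rewrite ?eval_ws //.
  by case: Hn => // /[dup] /In_mem n_zs /zs_gt3; rewrite /update n_zs.
have sat_sigma e : List.In e X ->
    sat_eq ar B (update ar B v c zs) (subst_eq ar sigma e) <-> sat_eq ar B w e.
  move=> /X_vars [e1_vars e2_vars]; rewrite /sat_eq !eval_subst.
  by rewrite !(eval_eq_on _ _ _ w _ _ eval_sigma).
split=> [H e He | H _ /List.in_map_iff [e [<- He]]]; apply/sat_sigma => //.
  by apply: H; apply/List.in_map_iff; exists e.
exact: H.
Qed.

Lemma valid_guarded_update pi : valid_guarded pi <->
  forall B, in_var ar V B -> forall v, sat_conj ar B v pi ->
  forall c, sat_conj ar B (update ar B v c zs) gam' -> sat_conj ar B (update ar B v c zs) phi'.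
Proof.
have [_ gam_vars phi_vars] := shape.
split=> H B HB v Hv c; first by rewrite !sat_subst_update //; apply: H.
by rewrite -!sat_subst_update //; apply: H.
Qed.

Section Diagram.
Context {A : alg} {g : nat -> car A} {tr : car A -> tm}.
Hypothesis A_in_V : in_var ar V A.
Hypothesis trP : forall x, vars_in ar inws (tr x) /\ eval ar A g (tr x) = x.

Definition diagram (pi : conj_eq ar) : Prop :=
  conj_vars_in ar inws pi /\ sat_conj ar A g pi.

Definition derivable (X Y : conj_eq ar) : Prop :=
  exists pi, diagram pi /\ forall B, in_var ar V B -> forall w,
    sat_conj ar B w pi -> sat_conj ar B w X -> sat_conj ar B w Y.

Lemma derivable_diagram X pi : diagram pi -> derivable X pi.
Proof. by exists pi. Qed.

Lemma derivable_weaken X Y Y' : derivable X Y ->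
  (forall B, in_var ar V B -> forall w,
     sat_conj ar B w X -> sat_conj ar B w Y -> sat_conj ar B w Y') ->
  derivable X Y'.
Proof. by case=> pi [Dpi HY] HY'; exists pi; split=> // B HB w Hpi HX; apply/HY'/HY. Qed.

Lemma derivable_hyp X Y : (forall e, List.In e Y -> List.In e X) -> derivable X Y.
Proof.
move=> YX; have X_nil : derivable X [::] by apply: derivable_diagram; split=> ? [].
by apply: derivable_weaken X_nil _ => B _ w HX _ e /YX; apply: HX.
Qed.

Lemma derivable_all X Y : (forall e, List.In e Y -> derivable X [:: e]) -> derivable X Y.
Proof.
elim: Y => [_ | e Y IH HY]; first exact: derivable_hyp.
have [pi1 [[pi1_ws pi1_A] He]] := HY e (or_introl erefl).
have [pi2 [[pi2_ws pi2_A] HY']] := IH (fun e' He' => HY e' (or_intror He')).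
exists (pi1 ++ pi2); split; first by split; apply/forall_In_cat.
move=> B HB w /forall_In_cat [Hpi1 Hpi2] HX.
by apply/(forall_In_cat _ _ [:: e]); split; [apply: He | apply: HY'].
Qed.

Definition derivable_eq X (u u' : tm) : Prop := derivable X [:: (u, u')].

Lemma derivable_eq_congruence X : is_congruence ar term_alg (derivable_eq X).
Proof.
split.
- move=> u; apply: derivable_weaken (derivable_hyp X [::] _) _ => // B _ w _ _.
  exact/sat_conj1.
- move=> u u' Hu; apply: derivable_weaken Hu _ => B _ w _ /sat_conj1 Eu.
  exact/sat_conj1/esym.
- move=> u u' u'' Hu Hu'.
  have Huu : derivable X [:: (u, u'); (u', u'')].
    by apply: derivable_all => e [<-|[<-|[]]].
  apply: derivable_weaken Huu _ => B _ w _ H.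
  by apply/sat_conj1; rewrite /sat_eq (H (u, u')) ?(H (u', u'')) /=; auto.
- move=> f a b Hab.
  have Hab_all : derivable X [seq (a i, b i) | i <- enum 'I_(ar f)].
    by apply: derivable_all => e /List.in_map_iff [i [<- _]]; apply: Hab.
  apply: derivable_weaken Hab_all _ => B _ w _ H; apply/sat_conj1.
  rewrite /sat_eq /=; congr (op ar B f); apply: functional_extensionality => i.
  apply: (H (a i, b i)).
  by apply/List.in_map_iff; exists i; split=> //; apply/In_mem/mem_enum.
Qed.

Local Notation Q X := (quot term_alg (derivable_eq X)).
Local Notation cl X := (qcl term_alg (derivable_eq X)).

Lemma cl_eq X u u' : cl X u = cl X u' <-> derivable X [:: (u, u')].
Proof. exact: qcl_eq (derivable_eq_congruence X) u u'. Qed.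

Lemma Q_in_var X : in_var ar V (Q X).
Proof.
apply: (quot_in_var _ _ (derivable_eq_congruence X)) => e He v; rewrite !eval_term_alg.
apply: derivable_weaken (derivable_hyp X [::] _) _ => // B HB w _ _.
by apply/sat_conj1; rewrite /sat_eq !eval_subst; apply: HB.
Qed.

Lemma sat_Q X sg Y :
  sat_conj ar (Q X) (fun n => cl X (sg n)) Y <-> derivable X (subst_conj ar sg Y).
Proof.
have sat_cl e : sat_eq ar (Q X) (fun n => cl X (sg n)) e <-> derivable X [:: subst_eq ar sg e].
  by rewrite /sat_eq !(eval_quot _ _ (derivable_eq_congruence X)) !eval_term_alg; apply: cl_eq.
split=> [HY | HY e He].
  by apply: derivable_all => _ /List.in_map_iff [e [<- He]]; apply/sat_cl/HY.
apply/sat_cl; apply: derivable_weaken HY _ => B _ w _ H.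
by apply/sat_conj1/H/List.in_map_iff; exists e.
Qed.

Definition to_Q X (x : car A) : car (Q X) := cl X (tr x).

Lemma to_Q_eval X u : vars_in ar inws u -> to_Q X (eval ar A g u) = cl X u.
Proof.
move=> u_ws; apply/cl_eq/derivable_diagram.
split=> _ [<-|[]] //; first by split=> //; apply: (trP _).1.
by rewrite /sat_eq /= (trP _).2.
Qed.

Lemma to_Q_hom X : is_hom ar A (Q X) (to_Q X).
Proof.
move=> f args.
have -> : op ar A f args = eval ar A g (App ar f (fun i => tr (args i))).
  by rewrite /=; congr (op ar A f); apply: functional_extensionality => i; rewrite (trP _).2.
by rewrite to_Q_eval; [apply: qcl_hom (derivable_eq_congruence X) f _ | move=> i; apply: (trP _).1].
Qed.

Lemma asg4_to_Q X :
  asg4 ar (Q X) (to_Q X (eval ar A g s1)) (to_Q X (eval ar A g s2))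
    (to_Q X (eval ar A g t1)) (to_Q X (eval ar A g t2)) (fun n => cl X (Var ar n)) =
  (fun n => cl X (sigma n)).
Proof. by apply: functional_extensionality => -[|[|[|[|n]]]] //=; rewrite to_Q_eval. Qed.

Lemma sat_gamma_Q :
  sat_conj ar (Q gam') (asg4 ar (Q gam') (to_Q gam' (eval ar A g s1)) (to_Q gam' (eval ar A g s2))
    (to_Q gam' (eval ar A g t1)) (to_Q gam' (eval ar A g t2)) (fun n => cl gam' (Var ar n))) gam.
Proof. by rewrite asg4_to_Q; apply/sat_Q/derivable_hyp. Qed.

Lemma embedding_gamma :
  (forall pi, diagram pi -> forall sg, eq_vars_in ar inws sg ->
     (forall B, in_var ar V B -> forall v,
        sat_conj ar B v pi -> sat_conj ar B v gam' -> sat_eq ar B v sg) ->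
     forall B, in_var ar V B -> forall v, sat_conj ar B v pi -> sat_eq ar B v sg) ->
  exists (C : alg) (e : car A -> car C),
    [/\ in_var ar V C, is_embedding ar A C e &
        exists c, sat_conj ar C (asg4 ar C (e (eval ar A g s1)) (e (eval ar A g s2))
                                  (e (eval ar A g t1)) (e (eval ar A g t2)) c) gam].
Proof.
move=> gam_conservative; exists (Q gam'), (to_Q gam').
split; [exact: Q_in_var | split; first exact: to_Q_hom | by eexists; apply: sat_gamma_Q].
move=> x y /cl_eq [pi [Dpi Hxy]].
rewrite -(trP x).2 -(trP y).2; apply: (gam_conservative pi Dpi (tr x, tr y)) => //.
- by split; [apply: (trP x).1 | apply: (trP y).1].
- by move=> B HB v Hv Hgam; apply/sat_conj1/Hxy.
- exact: Dpi.2.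
Qed.

Lemma Cg_diagram :
  Cg ar A (eval ar A g t1) (eval ar A g t2) (eval ar A g s1) (eval ar A g s2) <->
  exists pi, diagram pi /\ valid_quasi_identity pi.
Proof.
rewrite (Cg_iff_hom _ _ _ _ _ _ A_in_V); split=> [Hhom | [pi [[_ Api] Hpi]] B h HB Hh Eb].
  have := Hhom _ _ (Q_in_var [:: (t1, t2)]) (to_Q_hom _).
  rewrite !to_Q_eval // => /(_ _)/cl_eq [|pi [Dpi Hpi]]; first exact/cl_eq/derivable_hyp.
  by exists pi; split=> // B HB v Hv Ht; apply/sat_conj1/Hpi/sat_conj1.
rewrite !(hom_eval _ _ _ _ _ Hh); apply: Hpi (sat_conj_hom _ _ _ _ _ Hh Api) _ => //.
by rewrite /sat_eq -!(hom_eval _ _ _ _ _ Hh).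
Qed.

Lemma homs_diagram :
  (forall B h, in_var ar V B -> is_hom ar A B h ->
     gamma_to_phi B (h (eval ar A g s1)) (h (eval ar A g s2))
                    (h (eval ar A g t1)) (h (eval ar A g t2))) <->
  exists pi, diagram pi /\ valid_guarded pi.
Proof.
split=> [Hhom | [pi [[_ Api] Hpi]] B h HB Hh].
  have := Hhom _ _ (Q_in_var gam') (to_Q_hom _) _ sat_gamma_Q.
  rewrite asg4_to_Q => /sat_Q [pi [Dpi Hpi]].
  exists pi; split=> //; apply/valid_guarded_update => B HB v Hv c.
  by apply: Hpi => //; apply: sat_update_ws Dpi.1 Hv.
have := Hpi B HB _ (sat_conj_hom _ _ _ _ _ Hh Api).
by rewrite -!(hom_eval _ _ _ _ _ Hh).
Qed.

End Diagram.

Section Presentation.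
Context {rels : conj_eq ar} {f0 : F}.
Hypotheses (rels_ws : conj_vars_in ar inws rels) (f0_const : ar f0 = 0).

Definition const_term : tm := App ar f0 (fun _ => Var ar 0).

Lemma eval_const_term (B : alg) v w : eval ar B v const_term = eval ar B w const_term.
Proof.
by congr (op ar B f0); apply: functional_extensionality => -[i]; rewrite f0_const.
Qed.

(* Pinning the variables outside ws to a constant makes the presented algebra
   generated by the classes of the variables in ws. *)
Definition pin (B : alg) (v : nat -> car B) (n : nat) : car B :=
  if n \in ws then v n else eval ar B v const_term.

Lemma pin_ws (B : alg) v n : List.In n ws -> pin B v n = v n.
Proof. by rewrite /pin => /In_mem ->. Qed.

Definition pres_eq (u u' : tm) : Prop :=
  forall B, in_var ar V B -> forall v, sat_conj ar B v rels ->
  eval ar B (pin B v) u = eval ar B (pin B v) u'.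

Lemma pres_eq_congruence : is_congruence ar term_alg pres_eq.
Proof.
split.
- by move=> u B HB v Hv.
- by move=> u u' Hu B HB v Hv; apply/esym/Hu.
- by move=> u u' u'' Hu Hu' B HB v Hv; rewrite (Hu B HB v Hv); apply: Hu'.
- move=> f a b Hab B HB v Hv /=; congr (op ar B f).
  by apply: functional_extensionality => i; apply: Hab.
Qed.

Definition presented : alg := quot term_alg pres_eq.
Local Notation pcl := (qcl term_alg pres_eq).
Definition gen (n : nat) : car presented := pcl (Var ar n).

Lemma presented_in_var : in_var ar V presented.
Proof.
apply: (quot_in_var _ _ pres_eq_congruence) => e He u B HB v _.
by rewrite !eval_term_alg !eval_subst; apply: HB.
Qed.

Lemma hom_pcl (B : alg) h t : is_hom ar presented B h ->
  h (pcl t) = eval ar B (fun n => h (gen n)) t.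
Proof.
move=> Hh; rewrite -(hom_eval _ _ _ _ _ Hh) (eval_quot _ _ pres_eq_congruence).
by rewrite eval_term_alg subst_Var.
Qed.

Lemma presented_fin_gen : fin_gen ar presented.
Proof.
exists [seq gen n | n <- ws] => x; rewrite -(qrepK _ _ x).
elim: (qrep _ _ x) => [n|f us IH]; last first.
  by rewrite (qcl_hom _ _ pres_eq_congruence f us); apply: gen_op.
case/boolP: (n \in ws) => [/In_mem n_ws | n_ws].
  by apply: gen_base; apply/List.in_map_iff; exists n.
have -> : pcl (Var ar n) = pcl const_term.
  apply/(qcl_eq _ _ pres_eq_congruence) => B _ v _.
  by rewrite /= {1}/pin (negbTE n_ws); apply: (eval_const_term B v (pin B v)).
rewrite (qcl_hom _ _ pres_eq_congruence f0); apply: gen_op => -[i].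
by rewrite f0_const.
Qed.

Lemma sat_rels_gen : sat_conj ar presented gen rels.
Proof.
move=> e He; rewrite /sat_eq -!(hom_pcl _ id) //; apply/(qcl_eq _ _ pres_eq_congruence).
move=> B _ v Hv; apply: (sat_eq_eq_on _ _ v _ _ (rels_ws e He) _).1 (Hv e He).
by move=> n /pin_ws ->.
Qed.

Lemma lift_model (B : alg) v : in_var ar V B -> sat_conj ar B v rels ->
  exists h, is_hom ar presented B h /\ forall n, List.In n ws -> h (gen n) = v n.
Proof.
move=> HB Hv; pose h (x : car presented) := eval ar B (pin B v) (qrep term_alg pres_eq x).
have h_pcl u : h (pcl u) = eval ar B (pin B v) u.
  exact: (qrep_qcl _ _ pres_eq_congruence u B HB v Hv).
exists h; split=> [f args | n n_ws]; last first.
  by rewrite -(pin_ws B v n n_ws); apply: (h_pcl (Var ar n)).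
by rewrite /= h_pcl.
Qed.

Lemma forall_hom_presented (Phi : forall B : alg, car B -> car B -> car B -> car B -> Prop) :
  (forall B h, in_var ar V B -> is_hom ar presented B h ->
     Phi B (h (pcl s1)) (h (pcl s2)) (h (pcl t1)) (h (pcl t2))) <->
  (forall B, in_var ar V B -> forall v, sat_conj ar B v rels ->
     Phi B (eval ar B v s1) (eval ar B v s2) (eval ar B v t1) (eval ar B v t2)).
Proof.
split=> [Hhom B HB v Hv | Hmod B h HB Hh].
  have [h [Hh h_gen]] := lift_model B v HB Hv.
  have Eh u : vars_in ar inws u -> h (pcl u) = eval ar B v u.
    by move=> u_ws; rewrite hom_pcl //; apply: eval_eq_on u_ws h_gen.
  by rewrite -!Eh //; apply: Hhom.
by rewrite !hom_pcl //; apply/Hmod/sat_conj_hom/sat_rels_gen.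
Qed.

Lemma Cg_presented :
  Cg ar presented (pcl t1) (pcl t2) (pcl s1) (pcl s2) <-> valid_quasi_identity rels.
Proof.
rewrite (Cg_iff_hom _ _ _ _ _ _ presented_in_var).
exact: (forall_hom_presented (fun B p q r s => r = s -> p = q)).
Qed.

Lemma homs_presented :
  (forall B h, in_var ar V B -> is_hom ar presented B h ->
     gamma_to_phi B (h (pcl s1)) (h (pcl s2)) (h (pcl t1)) (h (pcl t2))) <->
  valid_guarded rels.
Proof. exact: (forall_hom_presented gamma_to_phi). Qed.

Lemma presented_conservative :
  (exists (C : alg) (e : car presented -> car C),
    [/\ in_var ar V C, is_embedding ar presented C e &
        exists c, sat_conj ar C
          (asg4 ar C (e (pcl s1)) (e (pcl s2)) (e (pcl t1)) (e (pcl t2)) c) gam]) ->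
  forall sg, eq_vars_in ar inws sg ->
  (forall B, in_var ar V B -> forall v,
     sat_conj ar B v rels -> sat_conj ar B v gam' -> sat_eq ar B v sg) ->
  forall B, in_var ar V B -> forall v, sat_conj ar B v rels -> sat_eq ar B v sg.
Proof.
move=> [C [e [HC [He e_inj] [c Hgam]]]] sg sg_ws Hsg B HB v Hv.
have [_ gam_vars _] := shape.
have e_rels := sat_conj_hom _ _ _ _ _ He sat_rels_gen.
have := Hsg C HC _ (sat_update_ws _ _ c _ rels_ws e_rels).
rewrite sat_subst_update // -!hom_pcl // => /(_ Hgam).
rewrite (sat_eq_eq_on _ _ _ _ _ sg_ws (update_ws _ _ c)) /sat_eq -!hom_pcl //.
move=> /e_inj /(qcl_eq _ _ pres_eq_congruence) /(_ B HB v Hv).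
by rewrite /sat_eq !(eval_eq_on _ _ (pin B v) v _ _ (pin_ws _ _)); case: sg_ws.
Qed.

End Presentation.

End Guard.

Lemma gdt_semantic V : guarded_deduction_theorem ar V -> semantic_condition ar V.
Proof.
move=> [zs [gam [phi [shape gdt]]]]; exists zs, gam, phi; split=> // A HA fgA a1 a2 b1 b2.
have [ws [g [tr [ws_fresh trP]]]] := fin_gen_fresh A zs a1 fgA.
move: (tr a1) (tr a2) (tr b1) (tr b2) (trP a1) (trP a2) (trP b1) (trP b2).
move=> s1 s2 t1 t2 [s1_ws <-] [s2_ws <-] [t1_ws <-] [t2_ws <-].
have {}gdt pi (Dpi : diagram (ws:=ws) (g:=g) pi) :=
  gdt ws ws_fresh s1 s2 t1 t2 s1_ws s2_ws t1_ws t2_ws pi Dpi.1.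
have guard_update := valid_guarded_update shape ws_fresh s1_ws s2_ws t1_ws t2_ws.
split.
  apply: (embedding_gamma s1_ws s2_ws t1_ws t2_ws HA trP) => pi Dpi sg sg_ws.
  exact: ((gdt pi Dpi).2 sg sg_ws).1.
rewrite (Cg_diagram s1_ws s2_ws t1_ws t2_ws HA trP).
rewrite (homs_diagram shape ws_fresh s1_ws s2_ws t1_ws t2_ws trP).
split=> -[pi [Dpi Hpi]]; exists pi; split=> //; have [Hi _] := gdt pi Dpi.
  by apply/guard_update/Hi.1.
by apply/Hi.2/guard_update.
Qed.

Lemma semantic_gdt V f0 : ar f0 = 0 -> semantic_condition ar V -> guarded_deduction_theorem ar V.
Proof.
move=> f0_const [zs [gam [phi [shape sem]]]]; exists zs, gam, phi; split=> //.
move=> ws ws_fresh /= s1 s2 t1 t2 s1_ws s2_ws t1_ws t2_ws pi pi_ws /=.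
pose pcl := qcl term_alg (pres_eq (V:=V) (ws:=ws) (rels:=pi) (f0:=f0)).
have [emb Cg_homs] := sem _ (presented_in_var (ws:=ws) (rels:=pi) (f0:=f0))
  (presented_fin_gen f0_const) (pcl s1) (pcl s2) (pcl t1) (pcl t2).
split; last first.
  move=> sg sg_ws; split=> [|H B HB v Hv _]; last exact: H.
  exact: (presented_conservative shape ws_fresh s1_ws s2_ws t1_ws t2_ws pi_ws emb).
rewrite -(valid_guarded_update shape ws_fresh s1_ws s2_ws t1_ws t2_ws).
rewrite -(homs_presented (f0:=f0) s1_ws s2_ws t1_ws t2_ws pi_ws) -Cg_homs.
exact: iff_sym (Cg_presented (f0:=f0) s1_ws s2_ws t1_ws t2_ws pi_ws).
Qed.

End UniversalAlgebra.

Theorem proposition5p5 (F : Type) (ar : F -> nat)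
    (has_const : exists f : F, ar f = 0) (V : variety ar) :
  guarded_deduction_theorem ar V <-> semantic_condition ar V.
Proof.
case: has_const => f0 f0_const.
by split; [apply: gdt_semantic | apply: semantic_gdt f0_const].
Qed.
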